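(* Let $\triangle$ be an apexed triangle with apex $a$, bottom side $bc$ and definer $s$, and let $x\in \mathsf{rCell}(\triangle)$. Let $y$ be the point where the ray from $a$ through $x$ meets the bottom side $bc$. Then the line segment $xy$ is contained in $\mathsf{rCell}(\triangle)$.
   Context: $P$ is a simple polygon, $S$ a finite set of points in $P$ with $|S|\ge 2$, and $d(x,y)$ the geodesic distance in $P$ (length of the shortest path between $x$ and $y$ contained in $P$). $\mathsf{Cell}(S,s)=\{x\in P: d(x,s)>d(x,s')\ \forall s'\in S\setminus\{s\}\}$. An apexed triangle is a Euclidean triangle $\triangle\subseteq P$ with corners $a,b,c$ such that $a$ (the apex) is a vertex of $P$, $b$ and $c$ lie on a common edge of $P$ (the segment $bc$ is the bottom side), together with a site $s\in S$ (the definer) such that $d(x,s)=\|x-a\|+d(a,s)$ for every $x\in\triangle$, where $\|\cdot\|$ is the Euclidean norm. The refined cell of $\triangle$ is $\mathsf{rCell}(\triangle)=\big(\mathrm{int}(\triangle)\cup (bc\setminus\{b,c\})\big)\cap\mathsf{Cell}(S,s)$. *)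

From Stdlib Require Import Reals Lra List ClassicalEpsilon.
Import ListNotations.
Open Scope R_scope.

Definition pt := (R * R)%type.

Definition dist (p q : pt) : R :=
  sqrt ((fst p - fst q) ^ 2 + (snd p - snd q) ^ 2).

Definition seg (p q z : pt) : Prop :=
  exists t, 0 <= t <= 1 /\
    z = (fst p + t * (fst q - fst p), snd p + t * (snd q - snd p)).

Definition triangle (a b c z : pt) : Prop :=
  exists u v w, 0 <= u /\ 0 <= v /\ 0 <= w /\ u + v + w = 1 /\
    z = (u * fst a + v * fst b + w * fst c, u * snd a + v * snd b + w * snd c).

Definition non_collinear (a b c : pt) : Prop :=
  (fst b - fst a) * (snd c - snd a) - (snd b - snd a) * (fst c - fst a) <> 0.

Definition interior (A : pt -> Prop) (z : pt) : Prop :=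
  exists eps, 0 < eps /\ forall w, dist z w < eps -> A w.

Definition vtx (V : list pt) (i : nat) : pt := nth (i mod length V) V (0, 0).

Definition edge (V : list pt) (i : nat) (z : pt) : Prop :=
  seg (vtx V i) (vtx V (S i)) z.

Definition on_boundary (V : list pt) (z : pt) : Prop :=
  exists i, (i < length V)%nat /\ edge V i z.

Definition simple_polygon (V : list pt) : Prop :=
  (3 <= length V)%nat /\ NoDup V /\
  forall i j z, (i < length V)%nat -> (j < length V)%nat -> i <> j ->
    edge V i z -> edge V j z ->
    (j = (S i) mod length V /\ z = vtx V j) \/
    (i = (S j) mod length V /\ z = vtx V i).

Fixpoint chain_in (A : pt -> Prop) (x : pt) (l : list pt) : Prop :=
  match l with
  | [] => True
  | p :: l' => (forall z, seg x p z -> A z) /\ chain_in A p l'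
  end.

Fixpoint chain_len (x : pt) (l : list pt) : R :=
  match l with
  | [] => 0
  | p :: l' => dist x p + chain_len p l'
  end.

Definition poly_path (A : pt -> Prop) (x y : pt) (l : list pt) : Prop :=
  chain_in A x l /\ last l x = y.

(* z lies in the unbounded component of the complement of the boundary *)
Definition outside (V : list pt) (z : pt) : Prop :=
  ~ on_boundary V z /\
  forall M, exists q l, M < dist (0, 0) q /\
    poly_path (fun w => ~ on_boundary V w) z q l.

(* the closed region P bounded by the polygon *)
Definition region (V : list pt) (z : pt) : Prop := ~ outside V z.

Definition is_inf (A : R -> Prop) (r : R) : Prop :=
  (forall l, A l -> r <= l) /\ (forall r', (forall l, A l -> r' <= l) -> r' <= r).

(* geodesic distance in P: infimum of lengths of paths in P
   (shortest paths in a simple polygon are polygonal) *)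
Definition gdist (V : list pt) (x y : pt) : R :=
  epsilon (inhabits 0)
    (is_inf (fun L => exists l, poly_path (region V) x y l /\ L = chain_len x l)).

Definition Cell (V : list pt) (Sites : list pt) (s x : pt) : Prop :=
  region V x /\
  forall s', In s' Sites -> s' <> s -> gdist V x s > gdist V x s'.

Definition apexed_triangle (V : list pt) (Sites : list pt) (a b c s : pt) : Prop :=
  non_collinear a b c /\
  (forall z, triangle a b c z -> region V z) /\
  In a V /\
  (exists i, (i < length V)%nat /\ edge V i b /\ edge V i c) /\
  In s Sites /\
  (forall x, triangle a b c x -> gdist V x s = dist x a + gdist V a s).

Definition rCell (V : list pt) (Sites : list pt) (a b c s x : pt) : Prop :=
  (interior (triangle a b c) x \/ (seg b c x /\ x <> b /\ x <> c)) /\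
  Cell V Sites s x.

(** Write [x = a + v (b - a) + w (c - a)] in barycentric coordinates. The ray
    from [a] through [x] meets [bc] at [y = a + t (x - a)] with [t (v + w) = 1],
    so [t >= 1] and every [z] on [xy] has the form [a + l (x - a)] with [l >= 1].
    Hence [z] stays in the triangle and, by the definer property,
    [d(z, s) = |z - x| + d(x, s)]. For every other site [s'] the triangle
    inequality along the segment [zx] gives [d(z, s') <= |z - x| + d(x, s')],
    so [z] inherits the strict inequalities defining [Cell(S, s)] from [x].
    As for the position of [z]: if [x] is interior, then [v, w > 0], so [z] is
    interior unless [z = y], which is then a relative interior point of [bc];
    if [x] lies on [bc] then [t = 1] and the segment [xy] is just [x]. *)

From Stdlib Require Import Reals List Lra Psatz.
From Stdlib Require Import ClassicalEpsilon FunctionalExtensionality PropExtensionality Classical.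
Open Scope R_scope.

Definition lerp (p q : pt) (t : R) : pt :=
  (fst p + t * (fst q - fst p), snd p + t * (snd q - snd p)).

Definition bary (a b c : pt) (v w : R) : pt :=
  (fst a + v * (fst b - fst a) + w * (fst c - fst a),
   snd a + v * (snd b - snd a) + w * (snd c - snd a)).

Definition convex (A : pt -> Prop) : Prop :=
  forall p q z, A p -> A q -> seg p q z -> A z.

Definition refined_triangle (a b c x : pt) : Prop :=
  interior (triangle a b c) x \/ (seg b c x /\ x <> b /\ x <> c).

Lemma lerp_same p r : lerp p p r = p.
Proof. apply injective_projections; simpl; ring. Qed.

Lemma lerp_1 p q : lerp p q 1 = q.
Proof. apply injective_projections; simpl; ring. Qed.

Lemma lerp_ray p q t r : lerp q (lerp p q t) r = lerp p q (1 + r * (t - 1)).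
Proof. apply injective_projections; simpl; ring. Qed.

Lemma seg_sym p q z : seg p q z -> seg q p z.
Proof.
  intros [r [Hr ->]]. exists (1 - r). split; [lra|].
  apply injective_projections; simpl; ring.
Qed.

Lemma lerp_bary_bary a b c v w v' w' r :
  lerp (bary a b c v w) (bary a b c v' w') r
  = bary a b c (v + r * (v' - v)) (w + r * (w' - w)).
Proof. apply injective_projections; simpl; ring. Qed.

Lemma lerp_apex_bary a b c v w t :
  lerp a (bary a b c v w) t = bary a b c (t * v) (t * w).
Proof. apply injective_projections; simpl; ring. Qed.

Lemma lerp_bc a b c k : lerp b c k = bary a b c (1 - k) k.
Proof. apply injective_projections; simpl; ring. Qed.

Lemma bary_b a b c : bary a b c 1 0 = b.
Proof. apply injective_projections; simpl; ring. Qed.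

Lemma bary_c a b c : bary a b c 0 1 = c.
Proof. apply injective_projections; simpl; ring. Qed.

Lemma triangle_bary a b c z :
  triangle a b c z <->
  exists v w, 0 <= v /\ 0 <= w /\ v + w <= 1 /\ z = bary a b c v w.
Proof.
  split.
  - intros [u [v [w [Hu [Hv [Hw [Hs ->]]]]]]]. exists v, w.
    repeat split; try lra. apply injective_projections; simpl; nra.
  - intros [v [w [Hv [Hw [Hs ->]]]]]. exists (1 - v - w), v, w.
    repeat split; try lra. apply injective_projections; simpl; ring.
Qed.

Lemma bary_inj a b c v w v' w' : non_collinear a b c ->
  bary a b c v w = bary a b c v' w' -> v = v' /\ w = w'.
Proof.
  unfold non_collinear. intros D E.
  assert (E1 := f_equal fst E); assert (E2 := f_equal snd E); simpl in E1, E2.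
  set (B1 := fst b - fst a) in *. set (B2 := snd b - snd a) in *.
  set (C1 := fst c - fst a) in *. set (C2 := snd c - snd a) in *.
  (* Cramer's rule for the 2x2 system with determinant B1 C2 - B2 C1. *)
  assert (Ev : (v - v') * (B1 * C2 - B2 * C1) = 0).
  { transitivity (C2 * ((fst a + v * B1 + w * C1) - (fst a + v' * B1 + w' * C1))
                  - C1 * ((snd a + v * B2 + w * C2) - (snd a + v' * B2 + w' * C2)));
      [ring | rewrite E1, E2; ring]. }
  assert (Ew : (w - w') * (B1 * C2 - B2 * C1) = 0).
  { transitivity (B1 * ((snd a + v * B2 + w * C2) - (snd a + v' * B2 + w' * C2))
                  - B2 * ((fst a + v * B1 + w * C1) - (fst a + v' * B1 + w' * C1)));
      [ring | rewrite E1, E2; ring]. }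
  apply Rmult_integral in Ev; apply Rmult_integral in Ew.
  split; [destruct Ev | destruct Ew]; lra.
Qed.

Lemma triangle_convex a b c : convex (triangle a b c).
Proof.
  intros p q z Hp Hq [r [Hr ->]].
  apply triangle_bary in Hp as [v [w [Hv [Hw [Hs ->]]]]].
  apply triangle_bary in Hq as [v' [w' [Hv' [Hw' [Hs' ->]]]]].
  fold (lerp (bary a b c v w) (bary a b c v' w') r).
  rewrite lerp_bary_bary, triangle_bary. do 2 eexists. repeat split; try reflexivity; nra.
Qed.

Lemma seg_bc_triangle a b c z : seg b c z -> triangle a b c z.
Proof.
  apply triangle_convex; apply triangle_bary.
  - exists 1, 0. rewrite bary_b. repeat split; lra.
  - exists 0, 1. rewrite bary_c. repeat split; lra.
Qed.

Lemma dist_nonneg p q : 0 <= dist p q.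
Proof. apply sqrt_pos. Qed.

Lemma dist_scaled p q k e1 e2 : 0 <= k ->
  fst p - fst q = k * e1 -> snd p - snd q = k * e2 ->
  dist p q = k * sqrt (e1 ^ 2 + e2 ^ 2).
Proof.
  intros Hk H1 H2. unfold dist. rewrite H1, H2.
  replace ((k * e1) ^ 2 + (k * e2) ^ 2) with (k ^ 2 * (e1 ^ 2 + e2 ^ 2)) by ring.
  rewrite sqrt_mult_alt by nra. rewrite sqrt_pow2 by lra. reflexivity.
Qed.

Lemma dist_ray_add p q t : 1 <= t ->
  dist (lerp p q t) p = dist (lerp p q t) q + dist q p.
Proof.
  intros Ht.
  rewrite (dist_scaled _ _ t (fst q - fst p) (snd q - snd p)) by (simpl; lra || ring).
  rewrite (dist_scaled _ _ (t - 1) (fst q - fst p) (snd q - snd p)) by (simpl; lra || ring).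
  rewrite (dist_scaled _ _ 1 (fst q - fst p) (snd q - snd p)) by (simpl; lra || ring).
  ring.
Qed.

Lemma interior_mem A x : interior A x -> A x.
Proof.
  intros [eps [He Hball]]. apply Hball. unfold dist.
  replace ((fst x - fst x) ^ 2 + (snd x - snd x) ^ 2) with 0 by ring.
  rewrite sqrt_0. exact He.
Qed.

Lemma interior_shift A x d1 d2 : interior A x ->
  exists del, 0 < del /\ A (fst x - del * d1, snd x - del * d2).
Proof.
  intros [eps [He Hball]].
  set (N := sqrt (d1 ^ 2 + d2 ^ 2)).
  assert (HN : 0 <= N) by apply sqrt_pos.
  exists (eps / (2 * N + 1)).
  assert (Hdel : eps / (2 * N + 1) * (2 * N + 1) = eps) by (field; lra).
  assert (Hpos : 0 < eps / (2 * N + 1)) by (apply Rdiv_lt_0_compat; lra).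
  split; [exact Hpos|]. apply Hball.
  rewrite (dist_scaled _ _ (eps / (2 * N + 1)) d1 d2) by (simpl; lra || ring).
  fold N. nra.
Qed.

(* The ball of radius [(1 - r) eps] about [lerp x y r] is the image of the
   ball of radius [eps] about [x] under the homothety of centre [y] and
   ratio [1 - r]. *)
Lemma interior_lerp A x y r : convex A -> interior A x -> A y -> 0 <= r < 1 ->
  interior A (lerp x y r).
Proof.
  intros HA [eps [He Hball]] Hy Hr.
  set (z := lerp x y r).
  exists ((1 - r) * eps). split; [nra|]. intros q Hq.
  set (q' := (fst x + (fst q - fst z) / (1 - r), snd x + (snd q - snd z) / (1 - r))).
  assert (Hinv : / (1 - r) * (1 - r) = 1) by (field; lra).
  assert (Hinv_pos : 0 < / (1 - r)) by (apply Rinv_0_lt_compat; lra).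
  assert (Hq' : A q').
  { apply Hball.
    rewrite (dist_scaled x q' (/ (1 - r)) (fst z - fst q) (snd z - snd q))
      by (simpl; lra || (field; lra)).
    change (/ (1 - r) * dist z q < eps). nra. }
  apply (HA q' y q Hq' Hy). exists r. split; [lra|].
  unfold q', z, lerp. apply injective_projections; simpl; field; lra.
Qed.

Lemma interior_triangle_bary_pos a b c v w : non_collinear a b c ->
  interior (triangle a b c) (bary a b c v w) -> 0 < v /\ 0 < w.
Proof.
  intros Hnc Hi. split.
  - destruct (interior_shift _ _ (fst b - fst a) (snd b - snd a) Hi) as [del [Hdel Hin]].
    replace (_, _) with (bary a b c (v - del) w) in Hin
      by (apply injective_projections; simpl; ring).
    apply triangle_bary in Hin as [v' [w' [Hv' [_ [_ E]]]]].
    apply bary_inj in E as [Ev _]; [lra | exact Hnc].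
  - destruct (interior_shift _ _ (fst c - fst a) (snd c - snd a) Hi) as [del [Hdel Hin]].
    replace (_, _) with (bary a b c v (w - del)) in Hin
      by (apply injective_projections; simpl; ring).
    apply triangle_bary in Hin as [v' [w' [_ [Hw' [_ E]]]]].
    apply bary_inj in E as [_ Ew]; [lra | exact Hnc].
Qed.

Definition path_lengths (V : list pt) (x y : pt) (L : R) : Prop :=
  exists l, poly_path (region V) x y l /\ L = chain_len x l.

Lemma gdist_path_lengths V x y :
  gdist V x y = epsilon (inhabits 0) (is_inf (path_lengths V x y)).
Proof. reflexivity. Qed.

Lemma is_inf_epsilon (A : R -> Prop) : (exists L, A L) -> (forall L, A L -> 0 <= L) ->
  is_inf A (epsilon (inhabits 0) (is_inf A)).
Proof.
  intros [L0 HL0] Hpos. apply epsilon_spec.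
  set (E := fun r => A (- r)).
  assert (Hb : bound E) by (exists 0; intros r Hr; apply Hpos in Hr; lra).
  assert (He : exists r, E r) by (exists (- L0); unfold E; rewrite Ropp_involutive; exact HL0).
  destruct (completeness E Hb He) as [m [Hub Hlub]].
  exists (- m). split.
  - intros l Hl. enough (- l <= m) by lra.
    apply Hub. unfold E. rewrite Ropp_involutive. exact Hl.
  - intros r' Hr'. enough (m <= - r') by lra.
    apply Hlub. intros r Hr. apply Hr' in Hr. lra.
Qed.

Lemma chain_len_nonneg x l : 0 <= chain_len x l.
Proof.
  revert x; induction l as [|p l IH]; intros x; simpl; [lra|].
  pose proof (dist_nonneg x p). pose proof (IH p). lra.
Qed.

Lemma last_cons (l : list pt) x d : last (x :: l) d = last l x.
Proof.
  revert x d; induction l as [|p l IH]; intros x d; [reflexivity|].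
  change (last (p :: l) d = last (p :: l) x). rewrite !IH. reflexivity.
Qed.

Lemma path_lengths_cons V p q y L : (forall w, seg p q w -> region V w) ->
  path_lengths V q y L -> path_lengths V p y (dist p q + L).
Proof.
  intros Hpq [l [[Hc Hl] ->]]. exists (q :: l). repeat split; auto.
  rewrite last_cons. exact Hl.
Qed.

(* When no path reaches [y], [gdist] is the junk value [epsilon] assigns to the
   empty set, the same from [p] and from [q]. *)
Lemma gdist_le_seg_add V p q y : (forall w, seg p q w -> region V w) ->
  gdist V p y <= dist p q + gdist V q y.
Proof.
  intros Hpq. rewrite !gdist_path_lengths.
  set (gp := epsilon _ (is_inf (path_lengths V p y))).
  set (gq := epsilon _ (is_inf (path_lengths V q y))).
  assert (Hpos : forall x L, path_lengths V x y L -> 0 <= L)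
    by (intros x L [l [_ ->]]; apply chain_len_nonneg).
  destruct (classic (exists L, path_lengths V q y L)) as [[L0 HL0] | Hnone].
  - pose proof (proj2 (is_inf_epsilon (path_lengths V q y) (ex_intro _ _ HL0) (Hpos q)))
      as Iq.
    pose proof (proj1 (is_inf_epsilon (path_lengths V p y)
                  (ex_intro _ _ (path_lengths_cons _ _ _ _ _ Hpq HL0)) (Hpos p))) as Ip.
    fold gp gq in Ip, Iq.
    enough (gp - dist p q <= gq) by lra.
    apply Iq. intros L HL. pose proof (Ip _ (path_lengths_cons _ _ _ _ _ Hpq HL)). lra.
  - assert (Hqp : forall w, seg q p w -> region V w) by (intros w Hw; apply Hpq, seg_sym, Hw).
    assert (E : path_lengths V p y = path_lengths V q y).
    { apply functional_extensionality; intros L; apply propositional_extensionality.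
      split; intros HL; exfalso; apply Hnone; eauto using path_lengths_cons. }
    unfold gp; rewrite E; fold gq. pose proof (dist_nonneg p q). lra.
Qed.

Lemma Cell_geodesic_extension V Sites s p q :
  Cell V Sites s q -> region V p -> (forall w, seg p q w -> region V w) ->
  gdist V p s = dist p q + gdist V q s -> Cell V Sites s p.
Proof.
  intros [_ Hq] Hp Hpq Hgd. split; [exact Hp|].
  intros s' Hs' Hne. specialize (Hq s' Hs' Hne).
  pose proof (gdist_le_seg_add V p q s' Hpq). lra.
Qed.

Lemma ray_exit_bary a b c v w t k : non_collinear a b c ->
  lerp a (bary a b c v w) t = lerp b c k -> t * v = 1 - k /\ t * w = k.
Proof.
  intros Hnc E. rewrite lerp_apex_bary, (lerp_bc a) in E.
  exact (bary_inj _ _ _ _ _ _ _ Hnc E).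
Qed.

Lemma ray_exit_param_ge_1 a b c x t k : non_collinear a b c -> triangle a b c x ->
  lerp a x t = lerp b c k -> 1 <= t.
Proof.
  intros Hnc Hx E. apply triangle_bary in Hx as [v [w [Hv [Hw [Hs ->]]]]].
  destruct (ray_exit_bary _ _ _ _ _ _ _ Hnc E) as [Ev Ew].
  assert (Hsum : t * (v + w) = 1) by lra.
  assert (Hpos : 0 < v + w).
  { destruct (Req_dec (v + w) 0) as [E0 | ]; [rewrite E0 in Hsum | ]; lra. }
  nra.
Qed.

Lemma refined_triangle_sub a b c x : refined_triangle a b c x -> triangle a b c x.
Proof.
  intros [Hi | [Hbc _]]; [exact (interior_mem _ _ Hi) | exact (seg_bc_triangle _ _ _ _ Hbc)].
Qed.

Lemma refined_triangle_seg_to_bottom a b c x y t z : non_collinear a b c ->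
  refined_triangle a b c x -> seg b c y -> y = lerp a x t -> seg x y z ->
  refined_triangle a b c z.
Proof.
  intros Hnc Hx Hy Hyx [r [Hr ->]].
  fold (lerp x y r).
  destruct (proj1 (triangle_bary a b c x) (refined_triangle_sub _ _ _ _ Hx))
    as [v [w [_ [_ [_ Ex]]]]].
  pose proof Hy as [k [_ Hyk]]. fold (lerp b c k) in Hyk.
  assert (Hexit : t * v = 1 - k /\ t * w = k)
    by (apply (ray_exit_bary a b c); [exact Hnc | rewrite <- Ex, <- Hyx; exact Hyk]).
  destruct Hx as [Hi | [Hxbc [Hxb Hxc]]].
  - rewrite Ex in Hi. destruct (interior_triangle_bary_pos _ _ _ _ _ Hnc Hi) as [Hv0 Hw0].
    destruct (Rle_lt_or_eq_dec r 1 (proj2 Hr)) as [Hr1 | ->].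
    + left. apply interior_lerp; [apply triangle_convex | rewrite Ex; exact Hi
        | exact (seg_bc_triangle _ _ _ _ Hy) | lra].
    + right. rewrite lerp_1. split; [exact Hy|].
      split; intros E.
      * assert (E' : bary a b c (1 - k) k = bary a b c 1 0)
          by (rewrite bary_b, <- (lerp_bc a), <- Hyk; exact E).
        apply bary_inj in E' as [_ E2]; [nra | exact Hnc].
      * assert (E' : bary a b c (1 - k) k = bary a b c 0 1)
          by (rewrite bary_c, <- (lerp_bc a), <- Hyk; exact E).
        apply bary_inj in E' as [E1 _]; [nra | exact Hnc].
  - pose proof Hxbc as [k' [_ Hxk]]. fold (lerp b c k') in Hxk.
    rewrite Ex, (lerp_bc a) in Hxk. apply bary_inj in Hxk as [Ev Ew]; [|exact Hnc].
    assert (Ht : t = 1) by nra.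
    rewrite Hyx, Ht, lerp_1, lerp_same. right. auto.
Qed.

Theorem mainTheorem7 (V Sites : list pt) (a b c s x y : pt) :
  simple_polygon V ->
  NoDup Sites -> (2 <= length Sites)%nat ->
  (forall p, In p Sites -> region V p) ->
  apexed_triangle V Sites a b c s ->
  rCell V Sites a b c s x ->
  seg b c y ->
  (exists t, 0 <= t /\ y = (fst a + t * (fst x - fst a), snd a + t * (snd x - snd a))) ->
  forall z, seg x y z -> rCell V Sites a b c s z.
Proof.
  intros _ _ _ _ [Hnc [Hreg [_ [_ [_ Hgd]]]]] [Hx HxC] Hy [t [_ Hyx]] z Hz.
  fold (lerp a x t) in Hyx.
  split; [exact (refined_triangle_seg_to_bottom a b c x y t z Hnc Hx Hy Hyx Hz)|].
  assert (Hxt := refined_triangle_sub _ _ _ _ Hx).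
  assert (Hyt := seg_bc_triangle a _ _ _ Hy).
  assert (Hzt := triangle_convex _ _ _ _ _ _ Hxt Hyt Hz).
  pose proof Hy as [k [_ Hyk]].
  assert (Ht : 1 <= t) by (apply (ray_exit_param_ge_1 a b c x t k Hnc Hxt); rewrite <- Hyx; exact Hyk).
  destruct Hz as [r [Hr Hzr]]. fold (lerp x y r) in Hzr.
  rewrite Hyx, lerp_ray in Hzr.
  apply (Cell_geodesic_extension V Sites s z x HxC (Hreg z Hzt)).
  - intros w Hw. exact (Hreg w (triangle_convex _ _ _ _ _ _ Hzt Hxt Hw)).
  - rewrite (Hgd z Hzt), (Hgd x Hxt), Hzr, dist_ray_add by nra. ring.
Qed.
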